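(* Consider the risk-averse quantal response mean-field game described in the context, assume the Lipschitz condition on $f_t,r_t$ and that $\nu$ is $m$-strongly convex for some $m>0$. Consider fixed-point iteration (FPI): starting from any $\pi^0\in\Pi$, set $\pi^{j+1}=\mathcal{B}^{\mathrm{RQE}}_{\mathrm{opt}}(\mathcal{B}^{\mathrm{RQE}}_{\mathrm{prop}}(\pi^j))$. Then for all sufficiently large $\alpha$, FPI converges to an MF-RQE: the sequence $(\pi^j)$ converges in $d_\Pi$ to a policy $\pi^*$ such that $(\pi^*,\mathcal{B}^{\mathrm{RQE}}_{\mathrm{prop}}(\pi^* ))$ is an MF-RQE.
   Context: Let $\mathcal{X},\mathcal{U}$ be finite nonempty sets and $T\ge1$. For finite $E$, $\mathcal{P}(E)$ is the set of probability vectors on $E$ and $d_{TV}(\mu,\mu')=\frac12\|\mu-\mu'\|_1$. For $t\in\{0,\dots,T-1\}$: transition kernels $f_t(x'\mid x,u,\mu)$ (a distribution over $x'\in\mathcal{X}$ for each $x,u$ and $\mu\in\mathcal{P}(\mathcal{X})$) and rewards $r_t:\mathcal{X}\times\mathcal{U}\times\mathcal{P}(\mathcal{X})\to[-R_{\max},R_{\max}]$. Lipschitz condition: there are $L_f,L_r>0$ with $\sum_{x'}|f_t(x'\mid x,u,\mu)-f_t(x'\mid x,u,\mu')|\le L_fd_{TV}(\mu,\mu')$ and $|r_t(x,u,\mu)-r_t(x,u,\mu')|\le L_rd_{TV}(\mu,\mu')$ for all $x,u,\mu,\mu',t$. A policy is $\pi=(\pi_0,\dots,\pi_{T-1})$ with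 $\pi_t(\cdot\mid x)\in\mathcal{P}(\mathcal{U})$; $\Pi_t$ is the set of time-$t$ decision rules, $\Pi$ the set of policies, and $d_\Pi(\pi,\pi')=\max_{x\in\mathcal{X},t<T}d_{TV}(\pi_t(\cdot\mid x),\pi'_t(\cdot\mid x))$. Given $\pi$ and $\mu_0$, the mean-field flow $(\mu_0,\dots,\mu_T)$ satisfies $\mu_{t+1}(x')=\sum_x\sum_uf_t(x'\mid x,u,\mu_t)\pi_t(u\mid x)\mu_t(x)$. Q-functions: $Q^\pi_{\mu,T-1}(x,u)=r_{T-1}(x,u,\mu_{T-1})$, $Q^\pi_{\mu,t}(x,u)=r_t(x,u,\mu_t)+\sum_{x'}f_t(x'\mid x,u,\mu_t)V^\pi_{\mu,t+1}(x')$ for $t<T-1$, with $V^\pi_{\mu,t}(x)=\sum_u\pi_t(u\mid x)Q^\pi_{\mu,t}(x,u)$. Data: a finite set $\mathbb{M}=\{\mu_0^1,\dots,\mu_0^K\}\subset\mathcal{P}(\mathcal{X})$ with probabilities $w_k=\Gamma^*(\mu_0^k)$; $\tau>0$; $\alpha>0$; a regularizer $\nu:\mathcal{P}(\mathcal{U})\to\mathbb{R}$; $\nu$ is $m$-strongly convex means $\nu(\lambda p+(1-\lambda)q)\le\lambda\nu(p)+(1-\lambda)\nu(q)-\frac m2\lambda(1-\lambda)\|p-q\|_2^2$ for all $p,q\in\mathcal{P}(\mathcal{U})$, $\lambda\in[0,1]$. A set of flows is $\mathcal{S}=\{\mu^1,\dots,\mu^K\}$ with $\mu^k$ a flow starting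 at $\mu_0^k$. Cost: $c_t^{\pi,\alpha}(x;\mathcal{S})=\frac1\tau\log\big(\sum_kw_k\exp(-\tau\sum_u\pi_t(u\mid x)Q^\pi_{\mu^k,t}(x,u))\big)+\alpha\nu(\pi_t(\cdot\mid x))$. $(\pi'_t,\pi_{-t})$ is $\pi$ with time-$t$ component replaced by $\pi'_t\in\Pi_t$. $\mathcal{B}^{\mathrm{RQE}}_{\mathrm{opt}}(\mathcal{S})$ is the (unique) policy $\pi$ such that for all $t,x$, $\pi_t(\cdot\mid x)$ minimizes $c_t^{(\pi'_t,\pi_{-t}),\alpha}(x;\mathcal{S})$ over $\pi'_t\in\Pi_t$. $\mathcal{B}^{\mathrm{RQE}}_{\mathrm{prop}}(\pi)$ is the set of flows generated by $\pi$ from each $\mu_0^k\in\mathbb{M}$. An MF-RQE is a pair $(\pi^*,\mathcal{S}^* )$ with $\pi^*=\mathcal{B}^{\mathrm{RQE}}_{\mathrm{opt}}(\mathcal{S}^* )$ and $\mathcal{B}^{\mathrm{RQE}}_{\mathrm{prop}}(\pi^* )=\mathcal{S}^*$. *)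

From HB Require Import structures.
From mathcomp Require Import all_boot all_order all_algebra.
From mathcomp Require Import reals sequences exp.
Set Implicit Arguments. Unset Strict Implicit. Unset Printing Implicit Defensive.
Import Order.TTheory GRing.Theory Num.Theory.
Local Open Scope ring_scope.

Section MFRQE.
Variables (R : realType) (X U : finType).

Definition isProb (E : finType) (p : E -> R) : Prop :=
  (forall e, 0 <= p e) /\ \sum_(e : E) p e = 1.

Definition dTV (E : finType) (p q : E -> R) : R :=
  2^-1 * \sum_(e : E) `|p e - q e|.

(* Time is indexed by nat; only t < T (resp. t <= T for flows) is relevant.
   Transition kernel: f t mu x u x' = f_t(x' | x, u, mu).
   Reward:            r t x u mu   = r_t(x, u, mu).
   Policy:            pi t x u     = pi_t(u | x). *)

Definition isDecisionRule (p : X -> U -> R) : Prop := forall x, isProb (p x).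

Definition isPolicy (T : nat) (pi : nat -> X -> U -> R) : Prop :=
  forall t, (t < T)%N -> isDecisionRule (pi t).

Definition dPi (T : nat) (pi pi' : nat -> X -> U -> R) : R :=
  \big[Num.max/0]_(t < T) \big[Num.max/0]_(x : X) dTV (pi t x) (pi' t x).

Fixpoint flow (f : nat -> (X -> R) -> X -> U -> X -> R)
    (pi : nat -> X -> U -> R) (mu0 : X -> R) (t : nat) : X -> R :=
  match t with
  | 0 => mu0
  | t'.+1 => fun x' =>
      \sum_(x : X) \sum_(u : U)
        f t' (flow f pi mu0 t') x u x' * pi t' x u * flow f pi mu0 t' x
  end.

(* Qb k t = Q-function at time t, computed with k remaining steps after t *)
Fixpoint Qb (f : nat -> (X -> R) -> X -> U -> X -> R)
    (r : nat -> X -> U -> (X -> R) -> R)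
    (pi : nat -> X -> U -> R) (mu : nat -> X -> R) (k t : nat) : X -> U -> R :=
  match k with
  | 0 => fun x u => r t x u (mu t)
  | k'.+1 => fun x u =>
      r t x u (mu t) +
      \sum_(x' : X) f t (mu t) x u x' *
        (\sum_(u' : U) pi t.+1 x' u' * Qb f r pi mu k' t.+1 x' u')
  end.

Definition Qfun (T : nat) f r pi mu (t : nat) : X -> U -> R :=
  Qb f r pi mu (T.-1 - t) t.

Definition repl (pi : nat -> X -> U -> R) (t : nat) (p : X -> U -> R) :
  nat -> X -> U -> R := fun s => if s == t then p else pi s.

Definition cost (T K : nat) f r (w : 'I_K -> R) (tau alpha : R)
    (nu : (U -> R) -> R) (pi : nat -> X -> U -> R)
    (S : 'I_K -> nat -> X -> R) (t : nat) (x : X) : R :=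
  tau^-1 * ln (\sum_(k < K) w k *
      expR (- tau * \sum_(u : U) pi t x u * Qfun T f r pi (S k) t x u))
  + alpha * nu (pi t x).

Definition IsBopt (T K : nat) f r w tau alpha nu
    (S : 'I_K -> nat -> X -> R) (pi : nat -> X -> U -> R) : Prop :=
  isPolicy T pi /\
  forall t, (t < T)%N -> forall x (p : X -> U -> R), isDecisionRule p ->
    cost T f r w tau alpha nu pi S t x <=
    cost T f r w tau alpha nu (repl pi t p) S t x.

Definition Bprop (K : nat) f (mu0 : 'I_K -> X -> R) (pi : nat -> X -> U -> R) :
  'I_K -> nat -> X -> R := fun k => flow f pi (mu0 k).

Definition isFlowSet (T K : nat) (mu0 : 'I_K -> X -> R)
    (S : 'I_K -> nat -> X -> R) : Prop :=
  forall k, S k 0%N = mu0 k /\ forall t, (t <= T)%N -> isProb (S k t).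

Definition IsMFRQE (T K : nat) f r w tau alpha nu mu0
    (pi : nat -> X -> U -> R) (S : 'I_K -> nat -> X -> R) : Prop :=
  IsBopt T f r w tau alpha nu S pi /\ Bprop f mu0 pi = S.

Definition strongly_convex (m : R) (nu : (U -> R) -> R) : Prop :=
  forall p q, isProb p -> isProb q -> forall lam : R, 0 <= lam <= 1 ->
    nu (fun u => lam * p u + (1 - lam) * q u) <=
    lam * nu p + (1 - lam) * nu q
    - m / 2 * lam * (1 - lam) * \sum_(u : U) (p u - q u) ^+ 2.

End MFRQE.

From HB Require Import structures.
From mathcomp Require Import all_boot all_order all_algebra.
From mathcomp Require Import classical_sets reals sequences exp.
From mathcomp Require Import ring lra zify.
Set Implicit Arguments. Unset Strict Implicit. Unset Printing Implicit Defensive.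
Import Order.TTheory GRing.Theory Num.Theory.
Local Open Scope ring_scope.

Lemma subr1_div (F : fieldType) (x z : F) : z != 0 -> x / z - 1 = (x - z) / z.
Proof. by move=> z0; rewrite mulrBl divff. Qed.

Section ExpLn.
Variable R : realType.
Implicit Types x y c d : R.

Lemma expR_midpoint x y : expR ((x + y) / 2) <= (expR x + expR y) / 2.
Proof.
have half (z : R) : expR z = expR (z / 2) ^+ 2 by rewrite -expRM_natl; congr expR; field.
have ex := half x; have ey := half y.
rewrite mulrDl expRD ex ey.
have := sqr_ge0 (expR (x / 2) - expR (y / 2)); nra.
Qed.

Lemma ln_le_subr1 y : 0 < y -> ln y <= y - 1.
Proof. by move=> y0; have := @le_ln1Dx R (y - 1); rewrite [1 + _]addrC subrK; apply; lra. Qed.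

Lemma expR_sub1_ge0 x : 0 <= x -> 0 <= expR x - 1.
Proof. by move=> x0; rewrite subr_ge0 -expR0 ler_expR. Qed.

Lemma expR_sub1_le x : expR x - 1 <= x * expR x.
Proof.
have h : (1 - x) * expR x <= 1.
  by have := ler_wpM2r (expR_ge0 x) (expR_ge1Dx (- x)); rewrite expRN mulVf ?gt_eqF ?expR_gt0.
nra.
Qed.

Lemma norm_expR_sub1_le d c : `|d| <= c -> `|expR d - 1| <= expR c - 1.
Proof.
move=> hd; have c0 : 0 <= c by apply: le_trans hd.
have [d0|d0] := lerP 0 d.
  rewrite ger0_norm ?expR_sub1_ge0 // lerD2r ler_expR.
  by rewrite -(ger0_norm d0).
rewrite ler0_norm; last by rewrite subr_le0 expR_le1 ltW.
have : - c <= d by rewrite -lerNl -(ltr0_norm d0).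
rewrite -ler_expR expRN => hNc.
have := expR_ge1Dx c; have := expR_gt0 c.
have eN : expR c * (expR c)^-1 = 1 by rewrite mulfV ?gt_eqF ?expR_gt0.
nra.
Qed.

Lemma expR_sub1_mul_le c d : 0 <= c -> 0 <= d ->
  (expR d - 1) * (expR c - 1) * expR d <= c * d * expR (c + 2 * d).
Proof.
move=> c0 d0.
apply: le_trans (_ : d * expR d * (c * expR c) * expR d <= _).
  by rewrite ler_wpM2r ?expR_ge0 // ler_pM ?expR_sub1_ge0 ?expR_sub1_le.
have -> : c + 2 * d = c + d + d by ring.
by rewrite !expRD le_eqVlt; apply/orP; left; apply/eqP; ring.
Qed.

Lemma ln_sub_ln_le x y : 0 < x -> 0 < y -> ln x - ln y <= (x - y) / y.
Proof.
move=> x0 y0; rewrite -ln_div ?posrE // -subr1_div ?lt0r_neq0 //.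
exact/ln_le_subr1/divr_gt0.
Qed.

End ExpLn.

Lemma sum_mulr_sub_sum_mulr (R : comPzRingType) (I : finType) (s e g : I -> R) :
  (\sum_i s i * e i * g i) * (\sum_i s i) - (\sum_i s i * g i) * (\sum_i s i * e i) =
  \sum_i \sum_j s i * s j * g i * (e i - e j).
Proof.
rewrite !big_distrl -sumrB; apply: eq_bigr => i _ /=.
by rewrite !big_distrr -sumrB; apply: eq_bigr => j _ /=; ring.
Qed.

Section Reweighting.
Variables (R : realType) (I : finType).

Lemma norm_sum_mulr_le (x y : I -> R) M :
  (forall i, `|y i| <= M) -> `|\sum_i x i * y i| <= (\sum_i `|x i|) * M.
Proof.
move=> hy; apply: le_trans (ler_norm_sum _ _ _) _.
by rewrite mulr_suml; apply: ler_sum => i _; rewrite normrM ler_wpM2l.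
Qed.

Lemma norm_prob_avg_le (p g : I -> R) M :
  isProb p -> (forall i, `|g i| <= M) -> `|\sum_i p i * g i| <= M.
Proof.
move=> [p0 p1] hg; apply: le_trans (norm_sum_mulr_le p hg) _.
by rewrite -[leRHS]mul1r -p1; under eq_bigr do rewrite ger0_norm //.
Qed.

Lemma norm_sum_mul_sub_le (a a' g g' : I -> R) M e :
  isProb a' -> (forall i, `|g i| <= M) -> (forall i, `|g i - g' i| <= e) ->
  `|\sum_i a i * g i - \sum_i a' i * g' i| <= (\sum_i `|a i - a' i|) * M + e.
Proof.
move=> ha' hg hgg'.
have -> : \sum_i a i * g i - \sum_i a' i * g' i =
    \sum_i (a i - a' i) * g i + \sum_i a' i * (g i - g' i).
  by rewrite -!sumrB -big_split /=; apply: eq_bigr => i _; ring.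
by rewrite (le_trans (ler_normD _ _)) // lerD ?norm_sum_mulr_le ?norm_prob_avg_le.
Qed.

Lemma reweighted_mean_le (s e g : I -> R) c G :
  (forall i, 0 <= s i) -> 0 < \sum_i s i ->
  (forall i, `|e i| <= c) -> (forall i, `|g i| <= G) ->
  `|(\sum_i s i * expR (e i) * g i) / (\sum_i s i * expR (e i))
    - (\sum_i s i * g i) / (\sum_i s i)| <= G * (expR (2 * c) - 1).
Proof.
move=> s0 S0 he hg.
set S := \sum_i s i; set Se := \sum_i s i * expR (e i).
have e_bnd i : expR (- c) <= expR (e i) <= expR c.
  by rewrite !ler_expR -ler_norml.
have SeS : expR (- c) * S <= Se.
  by rewrite /S mulr_sumr; apply: ler_sum => i _; have := e_bnd i; have := s0 i; nra.
have Se0 : 0 < Se by apply: lt_le_trans SeS; rewrite mulr_gt0 ?expR_gt0.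
have [i0 _] : exists i : I, True.
  case: (pickP (@predT I)) => [i _|none]; first by exists i.
  by move: S0; rewrite /S big_pred0 ?ltxx.
have G0 : 0 <= G by apply: le_trans (hg i0).
have -> : (\sum_i s i * expR (e i) * g i) / Se - (\sum_i s i * g i) / S =
    (\sum_i \sum_j s i * s j * g i * (expR (e i) - expR (e j))) / (Se * S).
  rewrite -(sum_mulr_sub_sum_mulr s (fun i => expR (e i)) g) -/S -/Se. field. all: rewrite ?gt_eqF //.
rewrite normrM normfV (gtr0_norm (mulr_gt0 Se0 S0)) ler_pdivrMr ?mulr_gt0 //.
have term i j : `|s i * s j * g i * (expR (e i) - expR (e j))| <=
    s i * s j * (G * (expR c - expR (- c))).
  rewrite !normrM (ger0_norm (s0 i)) (ger0_norm (s0 j)) -!mulrA.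
  do 2!apply: ler_wpM2l => //.
  by apply: ler_pM => //; have := e_bnd i; have := e_bnd j; rewrite ler_norml; lra.
have c0 : 0 <= c by apply: le_trans (he i0).
have K0 : 0 <= G * (expR (2 * c) - 1) by rewrite mulr_ge0 ?expR_sub1_ge0 ?mulr_ge0.
have expc : expR c - expR (- c) = (expR (2 * c) - 1) * expR (- c).
  by rewrite mulrBl mul1r -expRD; congr (expR _ - _); ring.
set C := G * (expR c - expR (- c)).
have dbl : \sum_i \sum_j s i * s j * C = C * (S * S).
  by rewrite [RHS]mulrC /S big_distrlr mulr_suml; apply: eq_bigr => i _; rewrite mulr_suml.
apply: le_trans (ler_norm_sum _ _ _) _.
apply: le_trans (ler_sum _ (fun i _ => le_trans (ler_norm_sum _ _ _)
                                     (ler_sum _ (fun j _ => term i j)))) _.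
rewrite dbl; apply: le_trans (ler_wpM2l K0 (ler_wpM2r (ltW S0) SeS)).
by rewrite /C expc /Se /S le_eqVlt; apply/orP; left; apply/eqP; ring.
Qed.


End Reweighting.

Section WeightedExpSum.
Variables (R : realType) (I : finType) (w : I -> R).
Hypothesis hw : isProb w.
Implicit Types a b d : I -> R.

Lemma isProb_inhabited (J : finType) (p : J -> R) : isProb p -> inhabited J.
Proof.
case=> _; case: (pickP (@predT J)) => [j _ _|none]; first by constructor.
by rewrite big_pred0 // => /eqP; rewrite eq_sym oner_eq0.
Qed.

Definition expsum a := \sum_i w i * expR (a i).

Lemma expsum_gt0 a : 0 < expsum a.
Proof.
have [w0 w1] := hw.
have h0 i : true -> 0 <= w i * expR (a i) by rewrite mulr_ge0 ?expR_ge0.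
rewrite lt_def sumr_ge0 ?andbT //; apply/eqP => /(psumr_eq0P h0) wexp0.
move: w1; rewrite big1 => [/eqP|i _]; first by rewrite eq_sym oner_eq0.
by have /eqP := wexp0 i isT; rewrite mulf_eq0 expR_eq0 orbF => /eqP.
Qed.

Lemma ler_expsum a b : (forall i, a i <= b i) -> expsum a <= expsum b.
Proof.
by move=> ab; apply: ler_sum => i _; rewrite ler_wpM2l ?ler_expR //; case: hw.
Qed.

Lemma expsumDr a c : expsum (fun i => a i + c) = expR c * expsum a.
Proof. by rewrite /expsum mulr_sumr; apply: eq_bigr => i _; rewrite expRD; ring. Qed.

Lemma ln_expsum_le a b c :
  (forall i, a i <= b i + c) -> ln (expsum a) <= ln (expsum b) + c.
Proof.
move=> /ler_expsum; rewrite expsumDr mulrC => le_ab.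
rewrite -[c]expRK -lnM ?posrE ?expR_gt0 ?expsum_gt0 //.
by rewrite ler_ln ?posrE ?mulr_gt0 ?expR_gt0 ?expsum_gt0.
Qed.

(* Normalising by A = expsum a and B = expsum b reduces midpoint convexity of
   ln \o expsum to that of expR, term by term. *)
Lemma ln_expsum_midpoint a b :
  ln (expsum (fun i => (a i + b i) / 2)) <= (ln (expsum a) + ln (expsum b)) / 2.
Proof.
have A0 := expsum_gt0 a; have B0 := expsum_gt0 b.
set A := expsum a in A0 *; set B := expsum b in B0 *.
set E := expR ((ln A + ln B) / 2).
suff le_E : expsum (fun i => (a i + b i) / 2) <= E.
  by rewrite -[leRHS]expRK ler_ln ?posrE ?expsum_gt0 ?expR_gt0.
apply: le_trans (_ : \sum_i w i * ((expR (a i) / A + expR (b i) / B) / 2 * E) <= _).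
  apply: ler_sum => i _; apply: ler_wpM2l; first by case: hw.
  have -> : (a i + b i) / 2 = ((a i - ln A) + (b i - ln B)) / 2 + (ln A + ln B) / 2.
    by rewrite !mulrDl; ring.
  rewrite expRD ler_wpM2r ?expR_ge0 //; apply: le_trans (expR_midpoint _ _) _.
  by rewrite !expRB !lnK ?posrE.
rewrite le_eqVlt; apply/orP; left; apply/eqP.
have -> : \sum_i w i * ((expR (a i) / A + expR (b i) / B) / 2 * E) =
    (expsum a / A + expsum b / B) / 2 * E.
  rewrite /expsum !mulr_suml -big_split /= mulr_suml mulr_suml.
  by apply: eq_bigr => i _; ring.
by rewrite -/A -/B (divff (lt0r_neq0 A0)) (divff (lt0r_neq0 B0)); field.
Qed.

Lemma expsum_ratio_ge a d D :
  (forall i, `|d i| <= D) -> expR (- D) <= expsum (fun i => a i + d i) / expsum a.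
Proof.
move=> hd; rewrite ler_pdivlMr ?expsum_gt0 // -expsumDr.
by apply: ler_expsum => i; have := hd i; rewrite ler_norml; lra.
Qed.

Lemma expsum_ratio_sub1 a d :
  expsum (fun i => a i + d i) / expsum a - 1 =
  (\sum_i w i * expR (a i) * (expR (d i) - 1)) / expsum a.
Proof.
rewrite subr1_div ?lt0r_neq0 ?expsum_gt0 //; congr (_ / _).
by rewrite /expsum -sumrB; apply: eq_bigr => i _; rewrite expRD; ring.
Qed.

Lemma sum_expR_reweight a b (F : I -> R) :
  \sum_i w i * expR (a i) * F i = \sum_i w i * expR (b i) * expR (a i - b i) * F i.
Proof.
apply: eq_bigr => i _; rewrite expRB; field; exact: lt0r_neq0 (expR_gt0 _).
Qed.

Lemma expsum_reweight a b :
  expsum a = \sum_i w i * expR (b i) * expR (a i - b i).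
Proof.
apply: eq_bigr => i _; rewrite expRB; field; exact: lt0r_neq0 (expR_gt0 _).
Qed.

Lemma expsum_ratio_dist a b d c D :
  (forall i, `|a i - b i| <= c) -> (forall i, `|d i| <= D) ->
  `|expsum (fun i => a i + d i) / expsum a - expsum (fun i => b i + d i) / expsum b|
  <= (expR D - 1) * (expR (2 * c) - 1).
Proof.
move=> hab hd.
set Ra := expsum (fun i => a i + d i) / expsum a.
set Rb := expsum (fun i => b i + d i) / expsum b.
have -> : Ra - Rb = (Ra - 1) - (Rb - 1) by rewrite opprB addrA subrK.
rewrite /Ra /Rb !expsum_ratio_sub1.
rewrite (sum_expR_reweight a b) (expsum_reweight a b).
apply: (reweighted_mean_le (s := fun i => w i * expR (b i))
  (e := fun i => a i - b i) (g := fun i => expR (d i) - 1)) => //.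
- by move=> i; rewrite mulr_ge0 ?expR_ge0 //; case: hw.
- exact: expsum_gt0.
- by move=> i; apply: norm_expR_sub1_le.
Qed.


Lemma ln_expsum_mixed a b d c D :
  (forall i, `|a i - b i| <= c) -> (forall i, `|d i| <= D) ->
  ln (expsum (fun i => a i + d i)) - ln (expsum a)
  - (ln (expsum (fun i => b i + d i)) - ln (expsum b))
  <= 2 * c * D * expR (2 * c + 2 * D).
Proof.
move=> hab hd.
have [i0] := isProb_inhabited hw.
have c0 : 0 <= c by apply: le_trans (hab i0).
have D0 : 0 <= D by apply: le_trans (hd i0).
have Rb_ge := expsum_ratio_ge b hd.
have Rb0 := lt_le_trans (expR_gt0 _) Rb_ge.
rewrite -[ln _ - ln (expsum a)]ln_div -?[ln _ - ln (expsum b)]ln_div ?posrE ?expsum_gt0 //.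
have iRb : (expsum (fun i => b i + d i) / expsum b)^-1 <= expR D.
  by rewrite -[expR D]invrK lef_pV2 ?posrE ?invr_gt0 ?expR_gt0 // -expRN.
apply: le_trans (ln_sub_ln_le (divr_gt0 (expsum_gt0 _) (expsum_gt0 _)) Rb0) _.
apply: le_trans (ler_norm _) _; rewrite normrM normfV (gtr0_norm Rb0).
apply: le_trans (ler_pM (normr_ge0 _) _ (expsum_ratio_dist hab hd) iRb) _.
  by rewrite invr_ge0 ltW.
exact: expR_sub1_mul_le (mulr_ge0 (ler0n R 2) c0) D0.
Qed.

Lemma ln_expsum_cross a b d d' c D e :
  (forall i, `|a i - b i| <= c) -> (forall i, `|d i| <= D) ->
  (forall i, d i <= d' i + e) ->
  ln (expsum (fun i => a i + d i)) - ln (expsum a)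
  - (ln (expsum (fun i => b i + d' i)) - ln (expsum b))
  <= 2 * c * D * expR (2 * c + 2 * D) + e.
Proof.
move=> hab hd hdd'.
have := ln_expsum_mixed hab hd.
have : ln (expsum (fun i => b i + d i)) <= ln (expsum (fun i => b i + d' i)) + e.
  by apply: ln_expsum_le => i; have := hdd' i; lra.
lra.
Qed.

End WeightedExpSum.

Section Probability.
Variables (R : realType) (U : finType).
Implicit Types p q : U -> R.

Lemma l1_sqr_le (x : U -> R) : (\sum_u `|x u|) ^+ 2 <= #|U|%:R * \sum_u x u ^+ 2.
Proof.
have sq u : x u ^+ 2 = `|x u| ^+ 2 by rewrite real_normK ?num_real.
have amgm u v : `|x u| * `|x v| <= (x u ^+ 2 + x v ^+ 2) / 2.
  by rewrite !sq; exact: (leif_mean_square _ _).1.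
rewrite expr2 big_distrlr /=.
apply: le_trans (ler_sum _ (fun u _ => ler_sum _ (fun v _ => amgm u v))) _.
have inner : \sum_(u : U) \sum_(v : U) x v ^+ 2 = #|U|%:R * \sum_u x u ^+ 2.
  by rewrite sumr_const mulr_natl.
have outer : \sum_(u : U) \sum_(v : U) x u ^+ 2 = #|U|%:R * \sum_u x u ^+ 2.
  by rewrite exchange_big.
have -> : \sum_u \sum_v (x u ^+ 2 + x v ^+ 2) / 2 =
    (\sum_(u : U) \sum_(v : U) x u ^+ 2 + \sum_(u : U) \sum_(v : U) x v ^+ 2) / 2.
  rewrite mulrDl !mulr_suml -big_split /=; apply: eq_bigr => u _.
  by rewrite !mulr_suml -big_split /=; apply: eq_bigr => v _; rewrite mulrDl.
by rewrite inner outer; lra.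
Qed.

Lemma sum_norm_sub_le2 p q : isProb p -> isProb q -> \sum_u `|p u - q u| <= 2.
Proof.
move=> [p0 p1] [q0 q1]; apply: le_trans (_ : \sum_u (p u + q u) <= _).
  by apply: ler_sum => u _; rewrite ler_norml; have := p0 u; have := q0 u; lra.
by rewrite big_split /= p1 q1; lra.
Qed.

Lemma isProb_midpoint p q : isProb p -> isProb q ->
  isProb (fun u => 2^-1 * p u + (1 - 2^-1) * q u).
Proof.
move=> [p0 p1] [q0 q1]; split=> [u|]; first by have := p0 u; have := q0 u; lra.
by rewrite big_split /= -!mulr_sumr p1 q1; lra.
Qed.

End Probability.

Section EntropicCost.
Variables (R : realType) (U I : finType) (w : I -> R) (tau : R).
Hypotheses (hw : isProb w) (tau0 : 0 < tau).
Implicit Types (Q : I -> U -> R) (p q : U -> R).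

Definition risk_exponent Q p : I -> R := fun k => - tau * \sum_u p u * Q k u.

Definition entropic_cost Q p := tau^-1 * ln (expsum w (risk_exponent Q p)).

Lemma risk_exponentD Q p q k :
  risk_exponent Q q k = risk_exponent Q p k + risk_exponent Q (fun u => q u - p u) k.
Proof.
by rewrite /risk_exponent -mulrDr -big_split; congr (_ * _); apply: eq_bigr => u _ /=; ring.
Qed.

Lemma entropic_cost_midpoint Q p q :
  entropic_cost Q (fun u => 2^-1 * p u + (1 - 2^-1) * q u) <=
  (entropic_cost Q p + entropic_cost Q q) / 2.
Proof.
rewrite /entropic_cost -mulrDr -mulrA ler_wpM2l ?invr_ge0 ?(ltW tau0) //.
have -> : risk_exponent Q (fun u => 2^-1 * p u + (1 - 2^-1) * q u) =
    (fun k => (risk_exponent Q p k + risk_exponent Q q k) / 2).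
  apply: boolp.funext => k; rewrite /risk_exponent !mulr_sumr mulrDl !mulr_suml.
  by rewrite -big_split /=; apply: eq_bigr => u _; field.
exact: ln_expsum_midpoint.
Qed.

Lemma norm_risk_exponent_le Q M :
  (forall k u, `|Q k u| <= M) -> forall (x : U -> R) k,
  `|risk_exponent Q x k| <= tau * (M * \sum_u `|x u|).
Proof.
move=> hQ x k; rewrite /risk_exponent normrM normrN (gtr0_norm tau0) ler_pM2l //.
by rewrite mulrC; apply: norm_sum_mulr_le.
Qed.

Lemma risk_exponentBQ Q1 Q2 p k :
  risk_exponent Q1 p k - risk_exponent Q2 p k =
  risk_exponent (fun k u => Q1 k u - Q2 k u) p k.
Proof.
by rewrite /risk_exponent -mulrBr -sumrB; congr (_ * _); apply: eq_bigr => u _ /=; ring.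
Qed.

Definition Kx (B : R) := 1 + 2 * tau * B * expR (8 * tau * B).

Lemma Kx_ge0 B : 0 <= B -> 0 <= Kx B.
Proof.
by move=> B0; rewrite addr_ge0 // !mulr_ge0 ?expR_ge0 ?(ltW tau0).
Qed.

Lemma cross_bound_le_Kx B d v : 0 <= B -> 0 <= d -> d <= 2 * B -> 0 <= v -> v <= 2 ->
  tau^-1 * (2 * (tau * d) * (tau * (B * v)) * expR (2 * (tau * d) + 2 * (tau * (B * v)))
            + tau * (d * v)) <= Kx B * d * v.
Proof.
move=> B0 d0 dB v0 v2.
have expo : expR (2 * (tau * d) + 2 * (tau * (B * v))) <= expR (8 * tau * B).
  rewrite ler_expR.
  have : tau * d <= tau * (2 * B) by rewrite ler_pM2l.
  have : tau * (B * v) <= tau * (B * 2) by rewrite ler_pM2l // ler_wpM2l.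
  lra.
have -> : tau^-1 * (2 * (tau * d) * (tau * (B * v)) *
      expR (2 * (tau * d) + 2 * (tau * (B * v))) + tau * (d * v)) =
    d * v + 2 * tau * B * d * v * expR (2 * (tau * d) + 2 * (tau * (B * v))).
  by field; exact: lt0r_neq0.
have -> : Kx B * d * v = d * v + 2 * tau * B * d * v * expR (8 * tau * B).
  by rewrite /Kx; ring.
by rewrite lerD2l ler_wpM2l // !mulr_ge0 ?(ltW tau0).
Qed.

Lemma entropic_cost_cross B d Q1 Q2 p1 p2 :
  0 <= B -> 0 <= d -> d <= 2 * B ->
  (forall k u, `|Q1 k u| <= B) -> (forall k u, `|Q1 k u - Q2 k u| <= d) ->
  isProb p1 -> isProb p2 ->
  entropic_cost Q1 p2 - entropic_cost Q1 p1 + entropic_cost Q2 p1 - entropic_cost Q2 p2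
  <= Kx B * d * \sum_u `|p1 u - p2 u|.
Proof.
move=> B0 d0 dB hQ1 hQ hp1 hp2.
have sum_v : \sum_u `|p2 u - p1 u| = \sum_u `|p1 u - p2 u|.
  by apply: eq_bigr => u _; rewrite distrC.
have sum_p1 : \sum_u `|p1 u| = 1.
  by case: hp1 => p0 <-; apply: eq_bigr => u _; rewrite ger0_norm.
have dQ := norm_risk_exponent_le (Q := fun k u => Q1 k u - Q2 k u) hQ.
have hab k : `|risk_exponent Q1 p1 k - risk_exponent Q2 p1 k| <= tau * d.
  by rewrite risk_exponentBQ; have := dQ p1 k; rewrite sum_p1 mulr1.
have hd k : `|risk_exponent Q1 (fun u => p2 u - p1 u) k|
    <= tau * (B * \sum_u `|p1 u - p2 u|).
  by rewrite -sum_v; apply: norm_risk_exponent_le hQ1 _ k.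
have hdd' k : risk_exponent Q1 (fun u => p2 u - p1 u) k
    <= risk_exponent Q2 (fun u => p2 u - p1 u) k + tau * (d * \sum_u `|p1 u - p2 u|).
  by have := dQ (fun u => p2 u - p1 u) k; rewrite -risk_exponentBQ sum_v ler_norml; lra.
have := ln_expsum_cross hw hab hd hdd'.
rewrite -(boolp.funext (risk_exponentD Q1 p1 p2)) -(boolp.funext (risk_exponentD Q2 p1 p2)).
have itau : 0 <= tau^-1 by rewrite invr_ge0 ltW.
move=> /(ler_wpM2l itau); rewrite !mulrBr => H.
have v0 : 0 <= \sum_u `|p1 u - p2 u| by rewrite sumr_ge0.
apply: le_trans (cross_bound_le_Kx B0 d0 dB v0 (sum_norm_sub_le2 hp1 hp2)).
rewrite /entropic_cost; lra.
Qed.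




End EntropicCost.

Lemma le_div_of_sqr_le (R : realFieldType) (x k c : R) :
  0 < k -> 0 <= c -> 0 <= x -> k * x ^+ 2 <= c * x -> x <= c / k.
Proof.
move=> k0 c0; rewrite le_eqVlt => /orP [/eqP <-|x0]; first by move=> _; rewrite divr_ge0 // ltW.
move=> h; rewrite ler_pdivlMr // -(ler_pM2r x0).
by have -> : x * k * x = k * x ^+ 2 by rewrite expr2; ring.
Qed.

Section RegularizedArgmin.
Variables (R : realType) (U I : finType) (w : I -> R) (tau m : R) (nu : (U -> R) -> R).
Hypotheses (hw : isProb w) (tau0 : 0 < tau) (m0 : 0 < m).
Hypothesis hnu : strongly_convex m nu.
Implicit Types (Q : I -> U -> R) (p q : U -> R).

Lemma regularized_min_growth (F : (U -> R) -> R) alpha p q :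
  0 <= alpha -> isProb p -> isProb q ->
  F (fun u => 2^-1 * p u + (1 - 2^-1) * q u) <= (F p + F q) / 2 ->
  (forall q, isProb q -> F p + alpha * nu p <= F q + alpha * nu q) ->
  F p + alpha * nu p + alpha * m * (\sum_u (p u - q u) ^+ 2) / 4 <= F q + alpha * nu q.
Proof.
move=> a0 hp hq Fmid pmin.
have := pmin _ (isProb_midpoint hp hq).
have := ler_wpM2l a0 (hnu hp hq (lam := 2^-1) ltac:(apply/andP; split; lra)).
move: (\sum_u (p u - q u) ^+ 2) => N2.
have -> : alpha * (2^-1 * nu p + (1 - 2^-1) * nu q
      - m / 2 * 2^-1 * (1 - 2^-1) * N2) =
    2^-1 * (alpha * nu p) + 2^-1 * (alpha * nu q) - alpha * m * N2 / 8 by field.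
lra.
Qed.

Definition Kc (B : R) := 2 * #|U|%:R * Kx tau B / m.

Lemma Kc_ge0 B : 0 <= B -> 0 <= Kc B.
Proof. by move=> B0; rewrite divr_ge0 ?(ltW m0) // !mulr_ge0 // Kx_ge0. Qed.

Lemma entropic_argmin_dist_le alpha B d Q1 Q2 p1 p2 :
  0 < alpha -> 0 <= B -> 0 <= d ->
  (forall k u, `|Q1 k u| <= B) -> (forall k u, `|Q2 k u| <= B) ->
  (forall k u, `|Q1 k u - Q2 k u| <= d) -> isProb p1 -> isProb p2 ->
  (forall q, isProb q -> entropic_cost w tau Q1 p1 + alpha * nu p1
                         <= entropic_cost w tau Q1 q + alpha * nu q) ->
  (forall q, isProb q -> entropic_cost w tau Q2 p2 + alpha * nu p2
                         <= entropic_cost w tau Q2 q + alpha * nu q) ->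
  \sum_u `|p1 u - p2 u| <= Kc B * d / alpha.
Proof.
move=> a0 B0 d0 hQ1 hQ2 hQ hp1 hp2 min1 min2.
pose d' := Num.min d (2 * B).
have d'0 : 0 <= d' by rewrite le_min d0 mulr_ge0.
have hQ' k u : `|Q1 k u - Q2 k u| <= d'.
  rewrite le_min hQ /=; apply: le_trans (ler_normB _ _) _.
  by have := hQ1 k u; have := hQ2 k u; lra.
have := regularized_min_growth (ltW a0) hp1 hp2 (entropic_cost_midpoint hw tau0 _ _ _) min1.
have := regularized_min_growth (ltW a0) hp2 hp1 (entropic_cost_midpoint hw tau0 _ _ _) min2.
have d'B : d' <= 2 * B by rewrite ge_min lexx orbT.
have := entropic_cost_cross hw tau0 B0 d'0 d'B hQ1 hQ' hp1 hp2.
have -> : \sum_u (p2 u - p1 u) ^+ 2 = \sum_u (p1 u - p2 u) ^+ 2.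
  by apply: eq_bigr => u _; rewrite -sqrrN opprB.
move=> cross growth2 growth1.
have key : alpha * m * (\sum_u (p1 u - p2 u) ^+ 2)
    <= 2 * (Kx tau B * d' * \sum_u `|p1 u - p2 u|) by lra.
have cs := l1_sqr_le (fun u => p1 u - p2 u).
have v0 : 0 <= \sum_u `|p1 u - p2 u| by rewrite sumr_ge0.
have c0 : 0 <= 2 * #|U|%:R * Kx tau B * d' by rewrite !mulr_ge0 ?Kx_ge0.
apply: le_trans (le_div_of_sqr_le (mulr_gt0 a0 m0) c0 v0 _) _.
  apply: le_trans (ler_wpM2l (ltW (mulr_gt0 a0 m0)) cs) _.
  have := ler_wpM2l (ler0n R #|U|) key.
  by rewrite mulrCA !mulrA [_ * 2]mulrC.
rewrite /Kc ler_pdivrMr ?mulr_gt0 //.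
have -> : 2 * #|U|%:R * Kx tau B / m * d / alpha * (alpha * m) =
    2 * #|U|%:R * Kx tau B * d by field; rewrite !lt0r_neq0.
by rewrite ler_wpM2l ?mulr_ge0 ?Kx_ge0 // /d' ge_min lexx.
Qed.


End RegularizedArgmin.

Section TotalVariation.
Variables (R : realType) (E : finType).
Implicit Types p q s : E -> R.

Lemma dTV_ge0 p q : 0 <= dTV p q.
Proof. by rewrite /dTV mulr_ge0 ?invr_ge0 ?sumr_ge0. Qed.

Lemma dTVC p q : dTV p q = dTV q p.
Proof. by rewrite /dTV; congr (_ * _); apply: eq_bigr => e _; rewrite distrC. Qed.

Lemma dTV_triangle p q s : dTV p s <= dTV p q + dTV q s.
Proof.
rewrite /dTV -mulrDr ler_pM2l ?invr_gt0 // -big_split /=.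
by apply: ler_sum => e _; rewrite (le_trans _ (ler_distD (q e) _ _)) // addrC.
Qed.

Lemma dTV_le0 p q : dTV p q <= 0 -> p =1 q.
Proof.
rewrite /dTV pmulr_rle0 ?invr_gt0 // => h e; apply/eqP; rewrite -subr_eq0 -normr_le0.
by apply: le_trans h; rewrite (bigD1 e) //= lerDl sumr_ge0.
Qed.

End TotalVariation.

Section PolicyDistance.
Variables (R : realType) (X U : finType) (T : nat).
Implicit Types pi : nat -> X -> U -> R.

Lemma dTV_le_dPi pi pi' t x : (t < T)%N -> dTV (pi t x) (pi' t x) <= dPi T pi pi'.
Proof.
move=> ht; apply: le_trans (le_bigmax _ _ (Ordinal ht)).
exact: (le_bigmax _ (fun x => dTV (pi t x) (pi' t x))).
Qed.

Lemma dPi_le pi pi' c :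
  0 <= c -> (forall t x, (t < T)%N -> dTV (pi t x) (pi' t x) <= c) -> dPi T pi pi' <= c.
Proof.
move=> c0 h; apply: bigmax_le => // t _; apply: bigmax_le => // x _; exact: h.
Qed.

Lemma dPi_ge0 pi pi' : 0 <= dPi T pi pi'.
Proof. exact: bigmax_ge_id. Qed.

Lemma dPi_xx pi : dPi T pi pi = 0.
Proof.
apply/le_anti; rewrite dPi_ge0 andbT; apply: dPi_le => // t x _.
by rewrite /dTV big1 ?mulr0 // => u _; rewrite subrr normr0.
Qed.

Lemma dPiC pi pi' : dPi T pi pi' = dPi T pi' pi.
Proof. by apply: eq_bigr => t _; apply: eq_bigr => x _; exact: dTVC. Qed.

Lemma dPi_triangle pi1 pi2 pi3 : dPi T pi1 pi3 <= dPi T pi1 pi2 + dPi T pi2 pi3.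
Proof.
apply: dPi_le => [|t x ht]; first by rewrite addr_ge0 ?dPi_ge0.
by apply: le_trans (dTV_triangle _ (pi2 t x) _) _; rewrite lerD ?dTV_le_dPi.
Qed.

Lemma dPi_le0 pi pi' : dPi T pi pi' <= 0 -> forall t, (t < T)%N -> pi t = pi' t.
Proof.
move=> h t ht; apply: boolp.funext => x; apply: boolp.funext; apply: dTV_le0.
exact: le_trans (dTV_le_dPi _ _ _ ht) h.
Qed.

End PolicyDistance.

Section Transport.
Variables (R : realType) (X U : finType).
Implicit Types (K : X -> U -> X -> R) (p : X -> U -> R) (z : X -> R).

Definition push K p z : X -> R := fun x' => \sum_x \sum_u K x u x' * p x u * z x.

Lemma push_prob K p z :
  (forall x u, isProb (K x u)) -> isDecisionRule p -> isProb z -> isProb (push K p z).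
Proof.
move=> hK hp [z0 z1]; split=> [x'|].
  by apply: sumr_ge0 => x _; apply: sumr_ge0 => u _; rewrite !mulr_ge0 ?(hK x u).1 ?(hp x).1.
rewrite exchange_big /= -z1; apply: eq_bigr => x _; rewrite exchange_big /=.
rewrite -[RHS]mul1r -(hp x).2 mulr_suml; apply: eq_bigr => u _.
by rewrite -!mulr_suml (hK x u).2 mul1r.
Qed.

Lemma norm_mul3_sub_le (a a' b b' c c' : R) :
  0 <= a' -> 0 <= b -> 0 <= b' -> 0 <= c ->
  `|a * b * c - a' * b' * c'|
  <= `|a - a'| * b * c + a' * `|b - b'| * c + a' * b' * `|c - c'|.
Proof.
move=> a0 b0 b'0 c0.
have -> : a * b * c - a' * b' * c' =
  (a - a') * b * c + a' * (b - b') * c + a' * b' * (c - c') by ring.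
rewrite (le_trans (ler_normD _ _)) // lerD // ?(le_trans (ler_normD _ _)) // ?lerD //.
- by rewrite !normrM (ger0_norm b0) (ger0_norm c0).
- by rewrite !normrM (ger0_norm a0) (ger0_norm c0).
- by rewrite !normrM (ger0_norm a0) (ger0_norm b'0).
Qed.

Lemma push_l1_le K K' p p' z z' a b :
  (forall x u, isProb (K' x u)) -> isDecisionRule p -> isDecisionRule p' -> isProb z ->
  (forall x u, \sum_x' `|K x u x' - K' x u x'| <= a) ->
  (forall x, dTV (p x) (p' x) <= b) ->
  \sum_x' `|push K p z x' - push K' p' z' x'| <= a + 2 * b + \sum_x `|z x - z' x|.
Proof.
move=> hK' hp hp' [z0 z1] hKK' hpp'.
apply: le_trans (_ : \sum_x' \sum_x \sum_u
   (`|K x u x' - K' x u x'| * p x u * z x + K' x u x' * `|p x u - p' x u| * z x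
    + K' x u x' * p' x u * `|z x - z' x|) <= _).
  apply: ler_sum => x' _; rewrite -sumrB; apply: le_trans (ler_norm_sum _ _ _) _.
  apply: ler_sum => x _; rewrite -sumrB; apply: le_trans (ler_norm_sum _ _ _) _.
  by apply: ler_sum => u _; rewrite norm_mul3_sub_le ?(hK' x u).1 ?(hp x).1 ?(hp' x).1.
rewrite exchange_big /=.
apply: le_trans (_ : \sum_x (a * z x + 2 * b * z x + `|z x - z' x|) <= _); last first.
  by rewrite !big_split /= -!mulr_sumr z1 !mulr1.
apply: ler_sum => x _; rewrite exchange_big /=.
apply: le_trans (_ : \sum_u (a * p x u * z x + `|p x u - p' x u| * z x
                              + p' x u * `|z x - z' x|) <= _).
  apply: ler_sum => u _; rewrite !big_split /= -!mulr_suml (hK' x u).2 !mul1r.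
  by rewrite lerD2r lerD2r ler_wpM2r ?z0 // ler_wpM2r ?(hp x).1.
rewrite !big_split /= -!mulr_suml -mulr_sumr (hp x).2 (hp' x).2 mul1r mulr1.
rewrite lerD2r lerD2l ler_wpM2r //.
by have := hpp' x; rewrite /dTV; lra.
Qed.

End Transport.

Section MeanFieldFlow.
Variables (R : realType) (X U : finType) (T : nat).
Variables (f : nat -> (X -> R) -> X -> U -> X -> R) (Lf : R).
Hypothesis hf : forall t, (t < T)%N -> forall mu x u, isProb mu -> isProb (f t mu x u).
Hypothesis Lf0 : 0 < Lf.
Hypothesis hfL : forall t, (t < T)%N -> forall x u mu mu', isProb mu -> isProb mu' ->
  \sum_x' `|f t mu x u x' - f t mu' x u x'| <= Lf * dTV mu mu'.
Implicit Types (pi : nat -> X -> U -> R) (mu : X -> R).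

Lemma flowS pi mu t : flow f pi mu t.+1 = push (f t (flow f pi mu t)) (pi t) (flow f pi mu t).
Proof. by []. Qed.

Lemma flow_prob pi mu :
  isPolicy T pi -> isProb mu -> forall t, (t <= T)%N -> isProb (flow f pi mu t).
Proof.
move=> hpi hmu; elim=> [//|t IH] ht; rewrite flowS.
by apply: push_prob; [move=> x u; apply: hf => //; exact: IH (ltnW ht) | exact: hpi | exact: IH (ltnW ht)].
Qed.

Lemma flow_dTV_le pi pi' mu :
  isPolicy T pi -> isPolicy T pi' -> isProb mu -> forall t, (t <= T)%N ->
  dTV (flow f pi mu t) (flow f pi' mu t) <= t%:R * (Lf + 1) ^+ t * dPi T pi pi'.
Proof.
move=> hpi hpi' hmu; have d0 := dPi_ge0 T pi pi'.
have L1 : 1 <= Lf + 1 by rewrite lerDr ltW.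
elim=> [|t IH] ht; first by rewrite /dTV big1 ?mulr0 ?mul0r // => x _; rewrite subrr normr0.
have ht' : (t < T)%N by [].
have hz := flow_prob hpi hmu (ltnW ht); have hz' := flow_prob hpi' hmu (ltnW ht).
have := push_l1_le (flow f pi' mu t) (fun x u => hf ht' x u hz') (hpi t ht') (hpi' t ht')
  hz (fun x u => hfL ht' x u hz hz') (fun x => dTV_le_dPi pi pi' x ht').
have two_dTV (p q : X -> R) : \sum_x `|p x - q x| = 2 * dTV p q.
  by rewrite /dTV mulrA mulfV ?mul1r // pnatr_eq0.
rewrite -!flowS !two_dTV => step.
have dz0 := dTV_ge0 (flow f pi mu t) (flow f pi' mu t).
have Ldz0 : 0 <= Lf * dTV (flow f pi mu t) (flow f pi' mu t) by rewrite mulr_ge0 // ltW.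
apply: le_trans (_ : (Lf + 1) * dTV (flow f pi mu t) (flow f pi' mu t) + dPi T pi pi' <= _).
  by rewrite mulrDl mul1r; lra.
have -> : t.+1%:R * (Lf + 1) ^+ t.+1 * dPi T pi pi' =
    (Lf + 1) * (t%:R * (Lf + 1) ^+ t * dPi T pi pi') + (Lf + 1) ^+ t.+1 * dPi T pi pi'.
  by rewrite exprS -natr1; ring.
rewrite lerD ?ler_wpM2l ?(le_trans ler01 L1) ?IH ?(ltnW ht) //.
by rewrite ler_peMl // exprn_ege1.
Qed.

End MeanFieldFlow.

Section QFunction.
Variables (R : realType) (X U : finType) (T : nat).
Variables (f : nat -> (X -> R) -> X -> U -> X -> R) (r : nat -> X -> U -> (X -> R) -> R).
Variable Rmax : R.
Hypothesis hf : forall t, (t < T)%N -> forall mu x u, isProb mu -> isProb (f t mu x u).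
Hypothesis hr : forall t, (t < T)%N -> forall x u mu, isProb mu -> - Rmax <= r t x u mu <= Rmax.
Implicit Types (pi : nat -> X -> U -> R) (mu : nat -> X -> R).

Lemma norm_reward_le t x u (mu : X -> R) :
  (t < T)%N -> isProb mu -> `|r t x u mu| <= `|Rmax|.
Proof.
by move=> ht hmu; apply: le_trans (ler_norm Rmax); rewrite ler_norml hr.
Qed.

Lemma Qb_norm_le pi mu j t x u : (t + j < T)%N ->
  (forall s, (t < s)%N -> (s <= t + j)%N -> isDecisionRule (pi s)) ->
  (forall s, (t <= s)%N -> (s <= t + j)%N -> isProb (mu s)) ->
  `|Qb f r pi mu j t x u| <= j.+1%:R * `|Rmax|.
Proof.
elim: j t x u => [|j IH] t x u htj hpi hmu /=.
  rewrite addn0 in htj; rewrite mul1r; apply: norm_reward_le => //.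
  by apply: hmu; rewrite ?addn0.
have ht : (t < T)%N by apply: leq_ltn_trans htj; apply: leq_addr.
rewrite -natr1 mulrDl mul1r [leRHS]addrC (le_trans (ler_normD _ _)) // lerD //.
  by apply: norm_reward_le => //; apply: hmu; rewrite ?leq_addr.
apply: norm_prob_avg_le => [|x']; first by apply: hf => //; apply: hmu; rewrite ?leq_addr.
apply: norm_prob_avg_le => [|u']; first by apply: hpi; rewrite // addnS ltnS leq_addr.
apply: IH; first by rewrite addSnnS.
- by move=> s h1 h2; apply: hpi; [apply: ltn_trans h1 | rewrite -addSnnS].
- by move=> s h1 h2; apply: hmu; [apply: ltnW | rewrite -addSnnS].
Qed.

Lemma Qb_ext pi pi' mu mu' j t x u :
  (forall s, (t < s)%N -> (s <= t + j)%N -> pi s = pi' s) ->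
  (forall s, (t <= s)%N -> (s <= t + j)%N -> mu s = mu' s) ->
  Qb f r pi mu j t x u = Qb f r pi' mu' j t x u.
Proof.
elim: j t x u => [|j IH] t x u hpi hmu /=; first by rewrite (hmu t) ?addn0.
rewrite (hmu t) ?leq_addr //; congr (_ + _); apply: eq_bigr => x' _.
rewrite (hpi t.+1) ?ltnSn ?addnS ?ltnS ?leq_addr //; congr (_ * _).
apply: eq_bigr => u' _; congr (_ * _); apply: IH.
- by move=> s h1 h2; apply: hpi; [apply: ltn_trans h1 | rewrite -addSnnS].
- by move=> s h1 h2; apply: hmu; [apply: ltnW | rewrite -addSnnS].
Qed.

End QFunction.

Section BestResponse.
Variables (R : realType) (X U : finType) (T K : nat).
Variables (f : nat -> (X -> R) -> X -> U -> X -> R) (r : nat -> X -> U -> (X -> R) -> R).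
Variables (w : 'I_K -> R) (tau alpha : R) (nu : (U -> R) -> R).
Implicit Types (pi : nat -> X -> U -> R) (S : 'I_K -> nat -> X -> R).

Lemma costE pi S t x : cost T f r w tau alpha nu pi S t x =
  entropic_cost w tau (fun k u => Qfun T f r pi (S k) t x u) (pi t x) + alpha * nu (pi t x).
Proof. by []. Qed.

Lemma cost_ext pi pi' S t x : (forall s, (s < T)%N -> pi s = pi' s) -> (t < T)%N ->
  cost T f r w tau alpha nu pi S t x = cost T f r w tau alpha nu pi' S t x.
Proof.
move=> hpp' ht; rewrite !costE (hpp' t ht).
suff -> : (fun k u => Qfun T f r pi (S k) t x u) = (fun k u => Qfun T f r pi' (S k) t x u).
  by [].
apply: boolp.funext => k; apply: boolp.funext => u.
by apply: Qb_ext => // s _ hs; apply: hpp'; lia.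
Qed.

Lemma IsBopt_ext pi pi' S : (forall s, (s < T)%N -> pi s = pi' s) ->
  IsBopt T f r w tau alpha nu S pi -> IsBopt T f r w tau alpha nu S pi'.
Proof.
move=> hpp' [hpi hmin]; split=> [t ht|t ht x p hp]; first by rewrite -hpp' //; exact: hpi.
have hrepl s : (s < T)%N -> repl pi t p s = repl pi' t p s.
  by move=> hs; rewrite /repl; case: (s == t) => //; exact: hpp'.
by rewrite -(cost_ext S x hpp' ht) -(cost_ext S x hrepl ht); exact: hmin.
Qed.

Lemma IsBopt_min S sig t x q : IsBopt T f r w tau alpha nu S sig -> (t < T)%N -> isProb q ->
  entropic_cost w tau (fun k u => Qfun T f r sig (S k) t x u) (sig t x) + alpha * nu (sig t x)
  <= entropic_cost w tau (fun k u => Qfun T f r sig (S k) t x u) q + alpha * nu q.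
Proof.
move=> [_ hmin] ht hq; have := hmin t ht x (fun _ => q) (fun _ => hq).
rewrite !costE /repl eqxx.
suff -> : (fun k u => Qfun T f r (fun s => if s == t then fun=> q else sig s) (S k) t x u)
    = (fun k u => Qfun T f r sig (S k) t x u) by [].
apply: boolp.funext => k; apply: boolp.funext => u.
by apply: Qb_ext => // s hs _; rewrite gtn_eqF.
Qed.

End BestResponse.

Section Contraction.
Variables (R : realType) (X U : finType) (T K : nat).
Variables (f : nat -> (X -> R) -> X -> U -> X -> R) (r : nat -> X -> U -> (X -> R) -> R).
Variables (Rmax Lf Lr : R) (mu0 : 'I_K -> X -> R) (w : 'I_K -> R).
Variables (tau m : R) (nu : (U -> R) -> R).
Hypothesis hT : (1 <= T)%N.
Hypothesis hf : forall t, (t < T)%N -> forall mu x u, isProb mu -> isProb (f t mu x u).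
Hypothesis hr : forall t, (t < T)%N -> forall x u mu, isProb mu -> - Rmax <= r t x u mu <= Rmax.
Hypotheses (Lf0 : 0 < Lf) (Lr0 : 0 < Lr).
Hypothesis hfL : forall t, (t < T)%N -> forall x u mu mu', isProb mu -> isProb mu' ->
  \sum_x' `|f t mu x u x' - f t mu' x u x'| <= Lf * dTV mu mu'.
Hypothesis hrL : forall t, (t < T)%N -> forall x u mu mu', isProb mu -> isProb mu' ->
  `|r t x u mu - r t x u mu'| <= Lr * dTV mu mu'.
Hypotheses (hmu0 : forall k, isProb (mu0 k)) (hw : isProb w).
Hypotheses (tau0 : 0 < tau) (m0 : 0 < m) (hnu : strongly_convex m nu).
Implicit Types (pi sig : nat -> X -> U -> R).

Definition Bq := T%:R * `|Rmax|.
Definition cF := T%:R * (Lf + 1) ^+ T.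
Definition Kq := Kc U tau m Bq.
Definition c0 := (Lr + Lf * Bq) * cF.
Definition Gq := 2 + Bq * Kq.
Definition cQ := c0 * Gq ^+ T.
Definition alpha0 := 1 + Kq * cQ.

Lemma Bq_ge0 : 0 <= Bq. Proof. by rewrite mulr_ge0. Qed.
Lemma cF_ge0 : 0 <= cF. Proof. by rewrite mulr_ge0 // exprn_ge0 // addr_ge0 // ltW. Qed.
Lemma Kq_ge0 : 0 <= Kq. Proof. exact: (Kc_ge0 U tau0 m0 Bq_ge0). Qed.
Lemma c0_ge0 : 0 <= c0.
Proof. by rewrite mulr_ge0 ?cF_ge0 // addr_ge0 ?mulr_ge0 ?Bq_ge0 // ltW. Qed.
Lemma Gq_ge1 : 1 <= Gq.
Proof. by rewrite /Gq; have := mulr_ge0 Bq_ge0 Kq_ge0; lra. Qed.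
Lemma cQ_ge0 : 0 <= cQ.
Proof. by rewrite mulr_ge0 ?c0_ge0 ?exprn_ge0 ?(le_trans ler01 Gq_ge1). Qed.

Lemma Bprop_prob pi k s : isPolicy T pi -> (s <= T)%N -> isProb (Bprop f mu0 pi k s).
Proof. by move=> hpi; apply: flow_prob. Qed.

Lemma Bprop_isFlowSet pi : isPolicy T pi -> isFlowSet T mu0 (Bprop f mu0 pi).
Proof. by move=> hpi k; split=> // t; exact: Bprop_prob. Qed.

Lemma Qb_le_Bq sig (S : 'I_K -> nat -> X -> R) k j t x u :
  isPolicy T sig -> (forall k s, (s <= T)%N -> isProb (S k s)) -> (t + j = T.-1)%N ->
  `|Qb f r sig (S k) j t x u| <= Bq.
Proof.
move=> hsig hS htj; apply: le_trans (Qb_norm_le hf hr _ _ _ _ _) _.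
- by lia.
- by move=> s _ hs; apply: hsig; lia.
- by move=> s _ hs; apply: hS; lia.
by rewrite ler_wpM2r // ler_nat; lia.
Qed.

Section Step.
Variables (alpha : R) (pi pi' sig sig' : nat -> X -> U -> R).
Hypotheses (ha : alpha0 < alpha) (hpi : isPolicy T pi) (hpi' : isPolicy T pi').
Hypothesis hsig : IsBopt T f r w tau alpha nu (Bprop f mu0 pi) sig.
Hypothesis hsig' : IsBopt T f r w tau alpha nu (Bprop f mu0 pi') sig'.

Local Notation S := (Bprop f mu0 pi).
Local Notation S' := (Bprop f mu0 pi').
Local Notation d := (dPi T pi pi').

Lemma alpha_ge1 : 1 <= alpha.
Proof. by have := mulr_ge0 Kq_ge0 cQ_ge0; have := ha; rewrite /alpha0; lra. Qed.

Lemma Bprop_dTV_le k s : (s <= T)%N -> dTV (S k s) (S' k s) <= cF * d.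
Proof.
move=> hs; apply: le_trans (flow_dTV_le hf Lf0 hfL hpi hpi' (hmu0 k) hs) _.
rewrite ler_wpM2r ?dPi_ge0 // /cF ler_pM ?exprn_ge0 ?ler_nat ?ler_weXn2l //.
- by rewrite addr_ge0 // ltW.
- by rewrite lerDr ltW.
Qed.

Lemma policy_dist_le t x e : (t < T)%N -> 0 <= e ->
  (forall k u, `|Qfun T f r sig (S k) t x u - Qfun T f r sig' (S' k) t x u| <= e) ->
  \sum_u `|sig t x u - sig' t x u| <= Kq * e / alpha.
Proof.
move=> ht e0 he; have hS k s := @Bprop_prob pi k s hpi; have hS' k s := @Bprop_prob pi' k s hpi'.
apply: (entropic_argmin_dist_le hw tau0 m0 hnu (B := Bq)
  (Q1 := fun k u => Qfun T f r sig (S k) t x u)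
  (Q2 := fun k u => Qfun T f r sig' (S' k) t x u)) => //.
- by apply: lt_le_trans alpha_ge1.
- exact: Bq_ge0.
- by move=> k u; apply: Qb_le_Bq; [exact: hsig.1 | exact: hS | lia].
- by move=> k u; apply: Qb_le_Bq; [exact: hsig'.1 | exact: hS' | lia].
- exact: hsig.1.
- exact: hsig'.1.
- by move=> q hq; apply: IsBopt_min.
- by move=> q hq; apply: IsBopt_min.
Qed.

Lemma value_dist_le j t k x e : (t + j = T.-1)%N -> 0 <= e ->
  (forall k x u, `|Qb f r sig (S k) j t x u - Qb f r sig' (S' k) j t x u| <= e) ->
  `|\sum_u sig t x u * Qb f r sig (S k) j t x u
    - \sum_u sig' t x u * Qb f r sig' (S' k) j t x u| <= (1 + Bq * Kq) * e.
Proof.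
move=> htj e0 he; have ht : (t < T)%N by lia.
have hS k' s := @Bprop_prob pi k' s hpi.
have Qb_le u : `|Qb f r sig (S k) j t x u| <= Bq.
  by apply: Qb_le_Bq; [exact: hsig.1 | exact: hS | exact: htj].
apply: le_trans (norm_sum_mul_sub_le (sig t x) (hsig'.1 t ht x) Qb_le (he k x)) _.
have hQ k' u : `|Qfun T f r sig (S k') t x u - Qfun T f r sig' (S' k') t x u| <= e.
  by rewrite /Qfun (_ : (T.-1 - t = j)%N) //; lia.
have := policy_dist_le ht e0 hQ.
rewrite ler_pdivlMr ?(lt_le_trans ltr01 alpha_ge1) // => hpol.
have hv : \sum_u `|sig t x u - sig' t x u| <= Kq * e.
  by apply: le_trans hpol; rewrite ler_peMr ?alpha_ge1 // sumr_ge0.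
by rewrite mulrDl mul1r [leRHS]addrC lerD2r mulrC -mulrA ler_wpM2l ?Bq_ge0.
Qed.

Lemma reward_dist_le t k x u : (t < T)%N ->
  `|r t x u (S k t) - r t x u (S' k t)| <= Lr * (cF * d).
Proof.
move=> ht; apply: le_trans (hrL ht x u (Bprop_prob k hpi (ltnW ht)) (Bprop_prob k hpi' (ltnW ht))) _.
by rewrite ler_wpM2l ?Bprop_dTV_le ?(ltnW ht) // ltW.
Qed.

Lemma Qb_dist_le j t k x u : (t + j = T.-1)%N ->
  `|Qb f r sig (S k) j t x u - Qb f r sig' (S' k) j t x u| <= c0 * d * Gq ^+ j.
Proof.
have cFd0 : 0 <= cF * d by rewrite mulr_ge0 ?cF_ge0 ?dPi_ge0.
have LBq0 : 0 <= Lf * Bq * (cF * d) by rewrite mulr_ge0 // mulr_ge0 ?Bq_ge0 // ltW.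
elim: j t k x u => [|j IH] t k x u htj.
  have ht : (t < T)%N by lia.
  apply: le_trans (reward_dist_le k x u ht) _.
  by rewrite expr0 mulr1 /c0 -mulrA mulrDl; lra.
have ht : (t < T)%N by lia.
have hS k' s := @Bprop_prob pi k' s hpi; have hS' k' s := @Bprop_prob pi' k' s hpi'.
have e0 : 0 <= c0 * d * Gq ^+ j.
  by rewrite mulr_ge0 ?exprn_ge0 ?(le_trans ler01 Gq_ge1) // mulr_ge0 ?c0_ge0 ?dPi_ge0.
have hV x' : `|\sum_u' sig t.+1 x' u' * Qb f r sig (S k) j t.+1 x' u'| <= Bq.
  apply: norm_prob_avg_le => [|u']; first by apply: hsig.1; lia.
  by apply: Qb_le_Bq; [exact: hsig.1 | exact: hS | lia].
have htj1 : (t.+1 + j = T.-1)%N by lia.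
have hVV' x' := value_dist_le k x' htj1 e0 (fun k x u => IH t.+1 k x u htj1).
rewrite /= opprD addrACA (le_trans (ler_normD _ _)) // (le_trans (lerD (reward_dist_le k x u ht)
  (norm_sum_mul_sub_le _ (hf ht x u (hS' k t (ltnW ht))) hV hVV'))) //.
have hfd : \sum_x' `|f t (S k t) x u x' - f t (S' k t) x u x'| <= Lf * (cF * d).
  apply: le_trans (hfL ht x u (hS k t (ltnW ht)) (hS' k t (ltnW ht))) _.
  by rewrite ler_wpM2l ?Bprop_dTV_le ?(ltnW ht) // ltW.
have c0d : c0 * d <= c0 * d * Gq ^+ j.
  by rewrite ler_peMr ?exprn_ege1 ?Gq_ge1 // mulr_ge0 ?c0_ge0 ?dPi_ge0.
have -> : c0 * d * Gq ^+ j.+1 = c0 * d * Gq ^+ j + (1 + Bq * Kq) * (c0 * d * Gq ^+ j).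
  by rewrite exprS /Gq; ring.
have ec0 : c0 * d = Lr * (cF * d) + Lf * (cF * d) * Bq by rewrite /c0; ring.
have := ler_wpM2r Bq_ge0 hfd; lra.
Qed.

Lemma contraction : dPi T sig sig' <= d / 2.
Proof.
have d0 := dPi_ge0 T pi pi'.
have a0 : 0 < alpha by apply: lt_le_trans alpha_ge1.
apply: dPi_le => [|t x ht]; first by rewrite divr_ge0.
have hQ k u : `|Qfun T f r sig (S k) t x u - Qfun T f r sig' (S' k) t x u| <= cQ * d.
  have htj : (t + (T.-1 - t) = T.-1)%N by lia.
  apply: le_trans (Qb_dist_le k x u htj) _.
  rewrite /cQ mulrAC ler_wpM2r // ler_wpM2l ?c0_ge0 // ler_weXn2l ?Gq_ge1 //; lia.
have Kd : Kq * (cQ * d) / alpha <= d.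
  rewrite ler_pdivrMr // mulrA mulrC ler_wpM2l //.
  by have := ha; rewrite /alpha0; lra.
have := policy_dist_le ht (mulr_ge0 cQ_ge0 d0) hQ.
by rewrite /dTV; lra.
Qed.

End Step.

End Contraction.

Section Geometric.
Variable R : realType.

Lemma exists_geometric_lt (C eps : R) : 0 <= C -> 0 < eps -> exists N : nat, C / 2 ^+ N < eps.
Proof.
move=> C0 e0; have := archi_boundP (divr_ge0 C0 (ltW e0)).
set N := Num.Def.archi_bound _ => hN; exists N.
have pow2 : (N%:R : R) < 2 ^+ N by rewrite -natrX ltr_nat ltn_expl.
by rewrite ltr_pdivrMr ?exprn_gt0 // mulrC -ltr_pdivrMr // (lt_trans hN).
Qed.

Lemma geometricS (C : R) n : C / 2 ^+ n.+1 = C / 2 ^+ n / 2.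
Proof. by rewrite exprSr invfM mulrA. Qed.

Lemma norm_le_geometric_eq0 (C y : R) :
  0 <= C -> (forall N : nat, `|y| <= C / 2 ^+ N) -> y = 0.
Proof.
move=> C0 h; apply/eqP; apply/negPn/negP; rewrite -normr_gt0 => y0.
have [N hN] := exists_geometric_lt C0 y0.
by have := h N; rewrite leNgt hN.
Qed.

Lemma sup_cauchy_dist_le (a e : nat -> R) :
  (forall j, 0 <= e j) -> (forall j k, (j <= k)%N -> `|a j - a k| <= e j) ->
  forall k, `|a k - sup (fun y => exists j, y = a j - e j)| <= e k.
Proof.
move=> e0 h k; set E := (fun y => exists j, y = a j - e j).
have ub k' y : E y -> y <= a k' + e k'.
  case=> j ->; have [jk|kj] := leqP j k'.
    by have := h j k' jk; have := e0 k'; rewrite ler_norml; lra.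
  by have := h k' j (ltnW kj); have := e0 j; rewrite ler_norml; lra.
have hub : has_ubound E by exists (a 0%N + e 0%N) => y /ub.
have lo : a k - e k <= sup E by apply: ub_le_sup => //; exists k.
have hi : sup E <= a k + e k by apply: ge_sup => [|y /ub//]; exists (a k - e k), k.
by rewrite ler_norml; apply/andP; split; lra.
Qed.

End Geometric.

Section FixedPointIteration.
Variables (R : realType) (X U : finType) (T : nat).
Local Notation policy := (nat -> X -> U -> R).
Variable step : policy -> policy -> Prop.
Hypothesis step_policy : forall pi sig, step pi sig -> isPolicy T sig.
Hypothesis step_contract : forall pi pi' sig sig', isPolicy T pi -> isPolicy T pi' ->
  step pi sig -> step pi' sig' -> dPi T sig sig' <= dPi T pi pi' / 2.
Variable pis : nat -> policy.
Hypotheses (pis0 : isPolicy T (pis 0%N)) (pisS : forall j, step (pis j) (pis j.+1)).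

Local Notation c := (dPi T (pis 0%N) (pis 1%N)).

Lemma iterate_policy j : isPolicy T (pis j).
Proof. by case: j => [|j] //; exact: step_policy (pisS j). Qed.

Lemma iterate_dist_succ j : dPi T (pis j) (pis j.+1) <= c / 2 ^+ j.
Proof.
elim: j => [|j IH]; first by rewrite expr0 divr1.
apply: le_trans (step_contract (iterate_policy j) (iterate_policy j.+1) (pisS j) (pisS j.+1)) _.
by rewrite exprSr invfM mulrA ler_pM2r ?invr_gt0 ?ltr0n.
Qed.

Lemma iterate_dist_le j n : dPi T (pis j) (pis (j + n)%N) <= 2 * c / 2 ^+ j - 2 * c / 2 ^+ (j + n).
Proof.
elim: n => [|n IH]; first by rewrite addn0 subrr dPi_xx.
apply: le_trans (dPi_triangle _ _ (pis (j + n)%N) _) _.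
have := iterate_dist_succ (j + n); rewrite addnS.
have -> : 2 * c / 2 ^+ (j + n).+1 = c / 2 ^+ (j + n).
  by rewrite exprS; field; rewrite expf_neq0 // pnatr_eq0.
lra.
Qed.

Local Notation E j := (4 * c / 2 ^+ j).

Lemma iterate_entry_dist t x u j k : (t < T)%N -> (j <= k)%N ->
  `|pis j t x u - pis k t x u| <= E j.
Proof.
move=> ht jk; have := iterate_dist_le j (k - j); rewrite subnKC //.
have := dTV_le_dPi (pis j) (pis k) x ht.
have : `|pis j t x u - pis k t x u| <= \sum_u' `|pis j t x u' - pis k t x u'|.
  by rewrite (bigD1 u) //= lerDl sumr_ge0.
have : 0 <= 2 * c / 2 ^+ k by rewrite divr_ge0 ?mulr_ge0 ?dPi_ge0 ?exprn_ge0.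
rewrite /dTV; lra.
Qed.

Definition iterate_limit : policy :=
  fun t x u => sup (fun y => exists j, y = pis j t x u - E j).

Lemma iterate_limit_entry_dist t x u k : (t < T)%N ->
  `|pis k t x u - iterate_limit t x u| <= E k.
Proof.
move=> ht; apply: sup_cauchy_dist_le => [j|j j' jj']; last exact: iterate_entry_dist.
by rewrite divr_ge0 ?mulr_ge0 ?dPi_ge0 ?exprn_ge0.
Qed.

Lemma E_ge0 j : 0 <= E j.
Proof. by rewrite divr_ge0 ?mulr_ge0 ?dPi_ge0 ?exprn_ge0. Qed.

Lemma iterate_limit_policy : isPolicy T iterate_limit.
Proof.
move=> t ht x; split=> [u|].
  rewrite leNgt; apply/negP => L0.
  suff : iterate_limit t x u = 0 by move=> L00; rewrite L00 ltxx in L0.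
  apply: (@norm_le_geometric_eq0 _ (4 * c)); first by rewrite mulr_ge0 ?dPi_ge0.
  move=> N; have := iterate_limit_entry_dist x u N ht; have := (iterate_policy N ht x).1 u.
  by move=> p0; rewrite ler_norml ltr0_norm //; lra.
apply/eqP; rewrite -subr_eq0; apply/eqP.
apply: (@norm_le_geometric_eq0 _ (#|U|%:R * (4 * c))); first by rewrite !mulr_ge0 ?dPi_ge0.
move=> N; rewrite -[X in _ - X](iterate_policy N ht x).2 -sumrB.
apply: le_trans (_ : \sum_(u : U) E N <= _); last by rewrite sumr_const -[_ *+ _]mulr_natl mulrA.
apply: le_trans (ler_norm_sum _ _ _) _; apply: ler_sum => u _.
by rewrite distrC iterate_limit_entry_dist.
Qed.

Lemma dPi_iterate_limit_le k : dPi T (pis k) iterate_limit <= #|U|%:R * E k.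
Proof.
apply: dPi_le => [|t x ht]; first by rewrite mulr_ge0 ?E_ge0.
have : \sum_u `|pis k t x u - iterate_limit t x u| <= #|U|%:R * E k.
  apply: le_trans (_ : \sum_(u : U) E k <= _); last by rewrite sumr_const -[_ *+ _]mulr_natl.
  by apply: ler_sum => u _; exact: iterate_limit_entry_dist.
have : 0 <= \sum_u `|pis k t x u - iterate_limit t x u| by rewrite sumr_ge0.
by rewrite /dTV; lra.
Qed.

Lemma iterate_limit_cvg eps : 0 < eps ->
  exists N : nat, forall j, (N <= j)%N -> dPi T (pis j) iterate_limit < eps.
Proof.
move=> e0; have C0 : 0 <= #|U|%:R * (4 * c) by rewrite !mulr_ge0 ?dPi_ge0.
have [N hN] := exists_geometric_lt C0 e0; exists N => j hj.
apply: le_lt_trans (dPi_iterate_limit_le j) (le_lt_trans _ hN).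
rewrite mulrA ler_wpM2l // lef_pV2 ?posrE ?exprn_gt0 //.
by rewrite ler_weXn2l // ler1n.
Qed.

Lemma iterate_limit_fixed sig :
  step iterate_limit sig -> forall t, (t < T)%N -> sig t = iterate_limit t.
Proof.
move=> hsig t ht; symmetry; apply: dPi_le0 ht; rewrite le_eqVlt; apply/orP; left.
apply/eqP/(@norm_le_geometric_eq0 _ (#|U|%:R * (4 * c))) => [|j].
  by rewrite !mulr_ge0 ?dPi_ge0.
rewrite ger0_norm ?dPi_ge0 //.
apply: le_trans (dPi_triangle _ _ (pis j.+1) _) _.
have := step_contract (iterate_policy j) iterate_limit_policy (pisS j) hsig.
have := dPi_iterate_limit_le j; have := dPi_iterate_limit_le j.+1.
rewrite dPiC !mulrA [_ / 2 ^+ j.+1]geometricS; lra.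
Qed.

Lemma fixed_point_iteration_cvg : exists pistar : policy,
  [/\ isPolicy T pistar,
      forall eps : R, 0 < eps -> exists N : nat, forall j, (N <= j)%N ->
        dPi T (pis j) pistar < eps
    & forall sig, step pistar sig -> forall t, (t < T)%N -> sig t = pistar t].
Proof.
exists iterate_limit; split; [exact: iterate_limit_policy | exact: iterate_limit_cvg |].
exact: iterate_limit_fixed.
Qed.

End FixedPointIteration.

Theorem theorem3 (R : realType) (X U : finType) (T K : nat)
  (f : nat -> (X -> R) -> X -> U -> X -> R)
  (r : nat -> X -> U -> (X -> R) -> R)
  (Rmax Lf Lr : R) (mu0 : 'I_K -> X -> R) (w : 'I_K -> R)
  (tau m : R) (nu : (U -> R) -> R) :
  (0 < #|X|)%N -> (0 < #|U|)%N -> (1 <= T)%N ->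
  (forall t, (t < T)%N -> forall mu x u, isProb mu -> isProb (f t mu x u)) ->
  (forall t, (t < T)%N -> forall x u mu, isProb mu ->
      - Rmax <= r t x u mu <= Rmax) ->
  0 < Lf -> 0 < Lr ->
  (forall t, (t < T)%N -> forall x u mu mu', isProb mu -> isProb mu' ->
      \sum_(x' : X) `|f t mu x u x' - f t mu' x u x'| <= Lf * dTV mu mu') ->
  (forall t, (t < T)%N -> forall x u mu mu', isProb mu -> isProb mu' ->
      `|r t x u mu - r t x u mu'| <= Lr * dTV mu mu') ->
  (forall k, isProb (mu0 k)) -> isProb w ->
  0 < tau -> 0 < m -> strongly_convex m nu ->
  exists alpha0 : R, forall alpha : R, alpha0 < alpha -> 0 < alpha ->
    (* standing assumption: B_opt^RQE(S) is well defined *)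
    (forall S, isFlowSet T mu0 S -> exists pi, IsBopt T f r w tau alpha nu S pi) ->
    forall pis : nat -> nat -> X -> U -> R,
      isPolicy T (pis 0%N) ->
      (forall j, IsBopt T f r w tau alpha nu (Bprop f mu0 (pis j)) (pis j.+1)) ->
      exists pistar : nat -> X -> U -> R,
        isPolicy T pistar /\
        (forall eps : R, 0 < eps -> exists N : nat, forall j, (N <= j)%N ->
           dPi T (pis j) pistar < eps) /\
        IsMFRQE T f r w tau alpha nu mu0 pistar (Bprop f mu0 pistar).
Proof.
move=> _ _ hT hf hr Lf0 Lr0 hfL hrL hmu0 hw tau0 m0 hnu.
exists (alpha0 U T Rmax Lf Lr tau m) => alpha ha _ hBopt pis hpis0 hpisS.
have [pistar [hpistar hcvg hfix]] := fixed_point_iteration_cvg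
  (step := fun pi sig => IsBopt T f r w tau alpha nu (Bprop f mu0 pi) sig)
  (fun _ _ hsig => hsig.1)
  (fun pi pi' sig sig' hpi hpi' => contraction hT hf hr Lf0 Lr0 hfL hrL hmu0 hw tau0 m0 hnu ha hpi hpi')
  hpis0 hpisS.
have [sig hsig] := hBopt _ (Bprop_isFlowSet hf hmu0 hpistar).
by exists pistar; split; [|split; [|split; [exact: IsBopt_ext (hfix _ hsig) hsig|]]].
Qed.
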